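(* Let $q$ be a prime power with $3\mid q-1$, $\ell$ divisible by $9$, and let $\alpha,\alpha',\alpha'',\beta,\beta',\beta''\in\mathbb{F}_q^*$ be such that for every perfect colored matching $\mathcal{Z}$ (for $r=3$) and every $\lambda\in\mathbb{F}_q^*$ the family $C_\mathcal{Z}(\lambda)=\{(A_Z(\lambda),S_Z),(A_{Z'}(\lambda),S_{Z'}),(A_{Z''}(\lambda),S_{Z''})\}$ satisfies the subspace condition with $r=3$. Let $\mathcal{X},\mathcal{Y}$ be two perfect colored matchings satisfying the pairing condition and $\lambda_x,\lambda_y\in\mathbb{F}_q^*$ with $\lambda_x^6\ne\lambda_y^6$. Then $C_\mathcal{X}(\lambda_x)\cup C_\mathcal{Y}(\lambda_y)$ satisfies the subspace condition with $r=3$.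
   Context: Vectors are row vectors and matrices act on the right. Subspace condition for $r,\ell$: a family $\{(A_i,S_i)\}_{i=1}^k$ of invertible $\ell\times\ell$ matrices and $(\ell/r)$-dimensional subspaces satisfies it if (i) $S_i+S_iA_i+\dots+S_iA_i^{r-1}=\mathbb{F}_q^\ell$ for all $i$; (ii) $S_iA_j=S_i$ for all $i\ne j$; (iii) every square block submatrix of the $k\times r$ block matrix with $(i,j)$ block $A_i^j$ ($j=0,\dots,r-1$) is invertible. $1,\gamma_1,\gamma_2$ are the cube roots of unity in $\mathbb{F}_q$. A perfect colored matching for $r=3$ is a triple $(Z,Z',Z'')$ of ordered sequences $Z=(z_0,\dots,z_{\ell/3-1})$, $Z'=(z'_0,\dots)$, $Z''=(z''_0,\dots)$ of standard unit vectors of $\mathbb{F}_q^\ell$ whose sets partition $\{e_0,\dots,e_{\ell-1}\}$; edges are $\{z_i,z'_i,z''_i\}$. Pairing condition: every edge of each matching lies in a single color class of the other. $A$ is the $\ell\times\ell$ block diagonal matrix with $3\times3$ blocks $\begin{pmatrix}0&0&1\\1&0&0\\0&1&0\end{pmatrix}$. $N(a,b,u,v,w)$ is the $3\times\ell$ matrix with rows $u$, $u-\frac{a\gamma_1}{\gamma_1-1}v+\frac{b}{\gamma_1-1}w$, $u+\frac{a}{\gamma_1-1}v-\frac{b\gamma_1}{\gamma_1-1}w$. $P_Z$ stacks $N(\alpha,\beta,z_i,z'_i,z''_i)$, $P_{Z'}$ stacks $N(\alpha',\beta',z'_i,z''_i,z_i)$, $P_{Z''}$ stacks $N(\alpha'',\beta'',z''_i,z_i,z'_i)$;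 $A_W(\lambda)=\lambda P_W^{-1}AP_W$, $S_W=\mathrm{span}(W)$ for $W\in\{Z,Z',Z''\}$. *)

From HB Require Import structures.
From mathcomp Require Import all_boot all_order all_algebra all_fingroup all_field.
Set Implicit Arguments. Unset Strict Implicit. Unset Printing Implicit Defensive.
Import Order.TTheory GRing.Theory Num.Theory.
Local Open Scope ring_scope.

(* Row vectors act on the right of matrices; subspaces of F^l are row spaces. *)

Definition evec {F : fieldType} {l : nat} (j : 'I_l) : 'rV[F]_l := delta_mx 0 j.

(* Subspace condition for r, l on a family {(A_i, S_i)}_{i < k};
   S_i is given by a matrix whose row space is the subspace. *)
Definition subspace_cond {F : fieldType} {k n l : nat} (r : nat)
    (A : 'I_k -> 'M[F]_l) (S : 'I_k -> 'M[F]_(n, l)) : Prop :=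
  [/\ (forall i, A i \in unitmx),
      (forall i, \rank (S i) = (l %/ r)%N),
      (forall i, (\sum_(j < r) <<S i *m A i ^+ j>> == 1%:M)%MS),
      (forall i j, i != j -> (S i *m A j == S i)%MS) &
      (* (iii) every square block submatrix of the k x r block matrix
         with (i,j) block A_i^j is invertible: choose t block rows
         s 0 < ... < s (t-1) and t block columns c 0 < ... < c (t-1). *)
      (forall (t : nat) (s : 'I_t -> 'I_k) (c : 'I_t -> 'I_r),
          {homo s : x y / (x < y)%N} -> {homo c : x y / (x < y)%N} ->
          \mxblock_(a < t, b < t) (A (s a) ^+ c b : 'M[F]_l) \in unitmx)].

(* A perfect colored matching (r = 3): Z c i is the index of the i-th unit
   vector of color c (c = 0,1,2 for Z, Z', Z''). *)
Definition colorset {l : nat} (Z : 'I_3 -> 'I_(l %/ 3) -> 'I_l) (c : 'I_3)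
  : {set 'I_l} := [set Z c i | i in 'I_(l %/ 3)].

Definition perfect_colored_matching {l : nat}
    (Z : 'I_3 -> 'I_(l %/ 3) -> 'I_l) : Prop :=
  (forall c c' : 'I_3, c != c' -> [disjoint colorset Z c & colorset Z c']) /\
  (\bigcup_(c < 3) colorset Z c = setT).

Definition edge {l : nat} (Z : 'I_3 -> 'I_(l %/ 3) -> 'I_l) (i : 'I_(l %/ 3))
  : {set 'I_l} := [set Z c i | c in 'I_3].

Definition pairing_condition {l : nat} (X Y : 'I_3 -> 'I_(l %/ 3) -> 'I_l)
  : Prop :=
  (forall i, exists c, edge X i \subset colorset Y c) /\
  (forall i, exists c, edge Y i \subset colorset X c).

(* the block-diagonal matrix A with 3x3 blocks [[0,0,1],[1,0,0],[0,1,0]] *)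
Definition Ablk {F : fieldType} (l : nat) : 'M[F]_l :=
  \matrix_(i, j) ((((i : nat) %/ 3 == (j : nat) %/ 3) &&
                   ((j : nat) %% 3 == ((i : nat) %% 3 + 2) %% 3))%N)%:R.

(* N(a,b,u,v,w), with g = gamma_1 *)
Definition Nmx {F : fieldType} {l : nat} (g a b : F) (u v w : 'rV[F]_l)
  : 'M[F]_(3, l) :=
  \matrix_(k < 3)
    (if (k : nat) == 0%N then u
     else if (k : nat) == 1%N
          then u - (a * g / (g - 1)) *: v + (b / (g - 1)) *: w
          else u + (a / (g - 1)) *: v - (b * g / (g - 1)) *: w).

(* stacks N(a,b,e_{u i},e_{v i},e_{w i}) for i = 0..l/3-1:
   row 3i+k of the result is row k of the i-th N. *)
Definition Pmx {F : fieldType} {l : nat} (g a b : F)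
    (u v w : 'I_(l %/ 3) -> 'I_l) : 'M[F]_l :=
  \matrix_(r < l)
    (match insub ((r : nat) %/ 3)%N : option 'I_(l %/ 3) with
     | Some i => row (inord ((r : nat) %% 3)) (Nmx g a b (evec (u i)) (evec (v i)) (evec (w i)))
     | None => 0
     end).

Definition c0 : 'I_3 := @Ordinal 3 0 isT.
Definition c1 : 'I_3 := @Ordinal 3 1 isT.
Definition c2 : 'I_3 := @Ordinal 3 2 isT.

Definition PW {F : fieldType} {l : nat} (g a a' a'' b b' b'' : F)
    (Z : 'I_3 -> 'I_(l %/ 3) -> 'I_l) (c : 'I_3) : 'M[F]_l :=
  match (c : nat) with
  | 0 => Pmx g a b (Z c0) (Z c1) (Z c2)
  | 1 => Pmx g a' b' (Z c1) (Z c2) (Z c0)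
  | _ => Pmx g a'' b'' (Z c2) (Z c0) (Z c1)
  end.

Definition AW {F : fieldType} {l : nat} (g a a' a'' b b' b'' : F)
    (Z : 'I_3 -> 'I_(l %/ 3) -> 'I_l) (lam : F) (c : 'I_3) : 'M[F]_l :=
  lam *: (invmx (PW g a a' a'' b b' b'' Z c) *m Ablk l *m PW g a a' a'' b b' b'' Z c).

Definition SW {F : fieldType} {l : nat} (Z : 'I_3 -> 'I_(l %/ 3) -> 'I_l)
    (c : 'I_3) : 'M[F]_(l %/ 3, l) :=
  \matrix_(i < l %/ 3) evec (Z c i).

Definition famU {T : Type} {k1 k2 : nat} (f : 'I_k1 -> T) (h : 'I_k2 -> T)
  : 'I_(k1 + k2) -> T :=
  fun i => match split i with inl a => f a | inr b => h b end.

From HB Require Import structures.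
From mathcomp Require Import all_boot all_order all_algebra all_fingroup all_field.
From mathcomp Require Import ring zify.
Import GRing.Theory.
Set Implicit Arguments. Unset Strict Implicit. Unset Printing Implicit Defensive.
Local Open Scope ring_scope.

(* Let W be one colour class of a matching and the other two classes follow it in the
   cyclic order used by P_W.  Relative to the coordinate blocks given by these three
   classes, A_W(lam) is block triangular with scalar diagonal blocks lam, lam g^2, lam g:
   P_W maps eigenvectors of the cyclic block matrix A to the unit vectors of the second
   and third class.  Each such matrix acts inside the edges of its matching, so by the
   pairing condition it commutes with the coordinate projections onto the colour classes
   of the other matching.  All eigenvalues of the X-family have sixth power lx^6 and
   those of the Y-family ly^6, so the two spectra, and their squares, are disjoint.
   Condition (ii) across the families then follows from the commutation, and the mixed
   blocks of (iii) are invertible: a kernel vector is split along the coordinate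
   projections of the triangular member and killed block by block using the
   separation of spectra. *)

Section Kernels.
Variables (F : fieldType) (l : nat).
Implicit Types (A B : 'M[F]_l) (z : 'rV[F]_l).

Lemma unitmx_rowP A : reflect (forall z, z *m A = 0 -> z = 0) (A \in unitmx).
Proof.
rewrite -row_free_unit; apply: (iffP idP) => [freeA z /eqP|]; last exact: inj_row_free.
by rewrite mulmx_free_eq0 // => /eqP.
Qed.

Lemma unitmx_subP A B : reflect (forall z, z *m A = z *m B -> z = 0) ((A - B) \in unitmx).
Proof.
apply: (iffP (unitmx_rowP _)) => inj z hz; apply: inj.
  by rewrite mulmxBr hz subrr.
by apply/eqP; rewrite -subr_eq0 -mulmxBr hz.
Qed.

Lemma noneigenvalueP A s : reflect (forall z, z *m A = s *: z -> z = 0) (~~ eigenvalue A s).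
Proof.
apply: (iffP negP) => [noeig z hz | inj /eigenvalueP [z /inj -> /eqP //]].
apply/eqP/negPn/negP => nz0; apply: noeig; apply/eigenvalueP; by exists z.
Qed.

Definition mxblock_free t (B : 'I_t -> 'I_t -> 'M[F]_l) :=
  forall z : 'I_t -> 'rV[F]_l, (forall b, \sum_a z a *m B a b = 0) -> forall a, z a = 0.

Lemma unitmx_mxblockP t (B : 'I_t -> 'I_t -> 'M[F]_l) :
  \mxblock_(a < t, b < t) B a b \in unitmx <-> mxblock_free B.
Proof.
have row_block (z : 'I_t -> 'rV[F]_l) :
    \mxrow_a z a *m \mxblock_(a < t, b < t) B a b = \mxrow_b \sum_a z a *m B a b.
  exact: mul_mxrow_mxblock.
have mxrow_eq0 (w : 'I_t -> 'rV[F]_l) : (forall a, w a = 0) -> \mxrow_a w a = 0.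
  by move=> w0; rewrite -(mxrow0 (q_ := fun _ : 'I_t => l)); apply: eq_mxrow.
rewrite -row_free_unit; split => [freeB z zB a | freeB].
  have /eqP := row_block z; rewrite (mxrow_eq0 _ zB) mulmx_free_eq0 // => /eqP z0.
  by rewrite -(mxrowK z a) z0 submxrow0.
apply: inj_row_free => v vB; rewrite -(submxrowK v) mxrow_eq0 // => a.
apply: freeB a => b; have := congr1 (fun M => submxrow M b) vB.
by rewrite -{1}(submxrowK v) row_block mxrowK submxrow0.
Qed.

End Kernels.

Section CoordinateProjections.
Variables (F : fieldType) (l : nat).
Implicit Types (S T : {set 'I_l}) (z : 'rV[F]_l).

Definition coordmx S : 'M[F]_l := diag_mx (\row_j (j \in S)%:R).

Lemma coordmxM S T : coordmx S *m coordmx T = coordmx (S :&: T).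
Proof.
apply/matrixP => i j; rewrite mul_diag_mx !mxE inE.
by case: (i \in S); case: (i \in T); rewrite /= ?mul1r ?mul0r ?mul0rn.
Qed.

Lemma coordmx0 : coordmx set0 = 0.
Proof. by apply/matrixP => i j; rewrite !mxE inE mul0rn. Qed.

Lemma evec_coordmx (j : 'I_l) S : evec j *m coordmx S = (j \in S)%:R *: (evec j : 'rV[F]_l).
Proof.
apply/rowP => k; rewrite mul_mx_diag !mxE eqxx /=.
by case: (k =P j) => [->|]; rewrite ?mulr0 ?mul0r ?mulr1 ?mul1r.
Qed.

Lemma matrix_evecP (M N : 'M[F]_l) : (forall j, evec j *m M = evec j *m N) -> M = N.
Proof. by move=> MN; apply/row_matrixP => j; rewrite !rowE MN. Qed.

Definition partition3 S0 S1 S2 :=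
  [/\ S0 :&: S1 = set0, S0 :&: S2 = set0, S1 :&: S2 = set0 & S0 :|: S1 :|: S2 = setT].

Variables S0 S1 S2 : {set 'I_l}.
Hypothesis partS : partition3 S0 S1 S2.

Lemma partition3_coordmx : coordmx S0 + coordmx S1 + coordmx S2 = 1%:M.
Proof.
case: partS => S01 S02 S12 S012; apply/matrixP => i j; rewrite !mxE.
have : i \in S0 :|: S1 :|: S2 by rewrite S012 inE.
have := congr1 (fun S => i \in S) S01; have := congr1 (fun S => i \in S) S02.
have := congr1 (fun S => i \in S) S12; rewrite !inE.
by case: (i \in S0); case: (i \in S1); case: (i \in S2); case: (i == j) => //= *;
  rewrite ?mulr0n ?mulr1n ?addr0 ?add0r.
Qed.

Lemma partition3_coordmx_eq0 z :
  z *m coordmx S0 = 0 -> z *m coordmx S1 = 0 -> z *m coordmx S2 = 0 -> z = 0.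
Proof.
by move=> z0 z1 z2; rewrite -[z]mulmx1 -partition3_coordmx !mulmxDr z0 z1 z2 !addr0.
Qed.

Lemma coordmx_orthogonal :
  [/\ coordmx S1 *m coordmx S2 = 0 :> 'M[F]_l & coordmx S2 *m coordmx S1 = 0 :> 'M[F]_l].
Proof. by case: partS => _ _ S12 _; rewrite !coordmxM [S2 :&: _]setIC S12 coordmx0. Qed.

(* With coordinates ordered S0 | S1 | S2, A = [[m, *, *], [0, k1, 0], [0, 0, k2]]
   (scalar blocks), acting on row vectors. *)
Definition scalar_triangular (A : 'M[F]_l) (m k1 k2 : F) :=
  [/\ A *m coordmx S0 = m *: coordmx S0, coordmx S1 *m A = k1 *: coordmx S1
    & coordmx S2 *m A = k2 *: coordmx S2].

Lemma scale_neq_eq0 (s m : F) (v : 'rV[F]_l) : s != m -> s *: v = m *: v -> v = 0.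
Proof.
by move=> sm /eqP; rewrite -subr_eq0 -scalerBl scaler_eq0 subr_eq0 (negPf sm) => /eqP.
Qed.

Variables (A : 'M[F]_l) (m k1 k2 : F).
Hypothesis triA : scalar_triangular A m k1 k2.

Lemma scalar_triangular_coord z :
  [/\ z *m A *m coordmx S0 = m *: (z *m coordmx S0),
      z *m coordmx S0 = 0 -> z *m A *m coordmx S1 = k1 *: (z *m coordmx S1) &
      z *m coordmx S0 = 0 -> z *m A *m coordmx S2 = k2 *: (z *m coordmx S2)].
Proof.
have [A0 A1 A2] := triA; have [D12 D21] := coordmx_orthogonal.
have zA (z0 : z *m coordmx S0 = 0) : z *m A = z *m coordmx S1 *m A + z *m coordmx S2 *m A.
  by rewrite -[z in LHS]mulmx1 -partition3_coordmx !mulmxDr !mulmxDl z0 mul0mx add0r.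
split=> [|z0|z0]; first by rewrite -mulmxA A0 scalemxAr.
  rewrite zA // mulmxDl -!(mulmxA z) A1 A2 -!scalemxAl D21 coordmxM setIid.
  by rewrite scaler0 mulmx0 addr0 scalemxAr.
rewrite zA // mulmxDl -!(mulmxA z) A1 A2 -!scalemxAl D12 coordmxM setIid.
by rewrite scaler0 mulmx0 add0r scalemxAr.
Qed.

Lemma scalar_triangular_sqr : scalar_triangular (A *m A) (m ^+ 2) (k1 ^+ 2) (k2 ^+ 2).
Proof.
have [A0 A1 A2] := triA; split.
- by rewrite -mulmxA A0 -scalemxAr A0 scalerA.
- by rewrite mulmxA A1 -scalemxAl A1 scalerA.
- by rewrite mulmxA A2 -scalemxAl A2 scalerA.
Qed.

Lemma scalar_triangular_noneigen s : s \notin [:: m; k1; k2] -> ~~ eigenvalue A s.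
Proof.
rewrite !inE !negb_or => /and3P [sm sk1 sk2]; apply/noneigenvalueP => z zA.
have [zA0 zA1 zA2] := scalar_triangular_coord z.
have z0 : z *m coordmx S0 = 0 by apply: (scale_neq_eq0 sm); rewrite -zA0 zA scalemxAl.
apply: partition3_coordmx_eq0 => //.
  by apply: (scale_neq_eq0 sk1); rewrite -(zA1 z0) zA scalemxAl.
by apply: (scale_neq_eq0 sk2); rewrite -(zA2 z0) zA scalemxAl.
Qed.

End CoordinateProjections.

Arguments coordmx {F l} S.

Section SpectralSeparation.
Variables (F : fieldType) (l : nat).
Implicit Types (A B : 'M[F]_l) (z y : 'rV[F]_l) (U V : {set 'I_l}).

Lemma scalar_triangular_sub_unit U0 U1 U2 V0 V1 V2 A B m k1 k2 n r1 r2 :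
  partition3 U0 U1 U2 -> partition3 V0 V1 V2 ->
  scalar_triangular U0 U1 U2 A m k1 k2 -> scalar_triangular V0 V1 V2 B n r1 r2 ->
  {in [:: U0; U1; U2], forall U, comm_mx B (coordmx U)} ->
  (forall e e', e \in [:: m; k1; k2] -> e' \in [:: n; r1; r2] -> e != e') ->
  (A - B) \in unitmx.
Proof.
move=> partU partV triA triB commB sepAB; apply/unitmx_subP => z zAB.
have coordB U x : z *m A *m coordmx U = x *: (z *m coordmx U) ->
    U \in [:: U0; U1; U2] -> x \in [:: m; k1; k2] -> z *m coordmx U = 0.
  move=> zAU hU hx; have /noneigenvalueP : ~~ eigenvalue B x.
    apply: (scalar_triangular_noneigen partV triB).
    by apply/negP => /(sepAB x _ hx); rewrite eqxx.
  apply; by rewrite -mulmxA -(commB U hU) mulmxA -zAB.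
have [zA0 zA1 zA2] := scalar_triangular_coord partU triA z.
have z0 : z *m coordmx U0 = 0 by apply: (coordB _ _ zA0); rewrite inE eqxx.
apply: (partition3_coordmx_eq0 partU z0).
  by apply: (coordB _ _ (zA1 z0)); rewrite !inE eqxx ?orbT.
by apply: (coordB _ _ (zA2 z0)); rewrite !inE eqxx ?orbT.
Qed.

Definition vandermonde3_free A1 A2 A3 :=
  forall z1 z2 z3 : 'rV[F]_l, z1 + z2 + z3 = 0 -> z1 *m A1 + z2 *m A2 + z3 *m A3 = 0 ->
    z1 *m (A1 *m A1) + z2 *m (A2 *m A2) + z3 *m (A3 *m A3) = 0 ->
  [/\ z1 = 0, z2 = 0 & z3 = 0].

(* With q_i := z_i A_i - s z_i the three equations give q_1 + q_2 = 0 and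
   q_1 A_1 + q_2 A_2 = 0. *)
Lemma vandermonde3_free_scalar A1 A2 s :
  ~~ eigenvalue A1 s -> ~~ eigenvalue A2 s -> (A1 - A2) \in unitmx ->
  vandermonde3_free A1 A2 s%:M.
Proof.
move=> /noneigenvalueP noeig1 /noneigenvalueP noeig2 /unitmx_subP inj12 z1 z2 y.
rewrite -scalar_mxM !mul_mx_scalar => sum0 sum1 sum2.
have yE : y = - (z1 + z2) by apply/eqP; rewrite -addr_eq0 addrC sum0.
rewrite yE in sum1 sum2.
pose q1 := z1 *m A1 - s *: z1; pose q2 := z2 *m A2 - s *: z2.
have q12 : q1 + q2 = 0 by rewrite -sum1 /q1 /q2; apply/rowP => j; rewrite !mxE; ring.
have q12A : q1 *m A1 + q2 *m A2 = 0.
  rewrite -[RHS](subr0 0) -{1}sum2 -(scaler0 _ s) -sum1 /q1 /q2 !mulmxBl -!scalemxAl !mulmxA.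
  by apply/rowP => j; rewrite !mxE; ring.
have q2E : q2 = - q1 by apply/eqP; rewrite -addr_eq0 addrC q12.
have q10 : q1 = 0 by apply: inj12; apply/eqP; rewrite -subr_eq0 -mulNmx -q2E q12A.
have z10 : z1 = 0 by apply: noeig1; apply/eqP; rewrite -subr_eq0 -/q1 q10.
have z20 : z2 = 0 by apply: noeig2; apply/eqP; rewrite -subr_eq0 -/q2 q2E q10 oppr0.
by rewrite yE z10 z20 addr0 oppr0.
Qed.

Lemma vandermonde3_coord S A1 A2 B s z1 z2 y :
  comm_mx A1 (coordmx S) -> comm_mx A2 (coordmx S) -> vandermonde3_free A1 A2 s%:M ->
  y *m B *m coordmx S = s *: (y *m coordmx S) ->
  y *m (B *m B) *m coordmx S = s ^+ 2 *: (y *m coordmx S) ->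
  z1 + z2 + y = 0 -> z1 *m A1 + z2 *m A2 + y *m B = 0 ->
  z1 *m (A1 *m A1) + z2 *m (A2 *m A2) + y *m (B *m B) = 0 ->
  [/\ z1 *m coordmx S = 0, z2 *m coordmx S = 0 & y *m coordmx S = 0].
Proof.
move=> comm1 comm2 free12 yB yB2 sum0 sum1 sum2.
have sqr_comm (C : 'M[F]_l) : comm_mx C (coordmx S) -> comm_mx (C *m C) (coordmx S).
  by move=> /comm_mx_sym CS; apply/comm_mx_sym/comm_mxM.
have comm11 := sqr_comm _ comm1; have comm22 := sqr_comm _ comm2.
apply: free12; rewrite -?scalar_mxM ?mul_mx_scalar -?expr2.
- by rewrite -!mulmxDl sum0 mul0mx.
- by rewrite -yB -!mulmxA -comm1 -comm2 !mulmxA -!mulmxDl sum1 mul0mx.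
rewrite -yB2 -!(mulmxA z1) -!(mulmxA z2) -comm11 -comm22 !mulmxA -!mulmxDl -!mulmxA sum2.
by rewrite mul0mx.
Qed.

Lemma scalar_triangular_vandermonde3 V0 V1 V2 A1 A2 B n r1 r2 :
  partition3 V0 V1 V2 -> scalar_triangular V0 V1 V2 B n r1 r2 ->
  {in [:: V0; V1; V2], forall V, comm_mx A1 (coordmx V)} ->
  {in [:: V0; V1; V2], forall V, comm_mx A2 (coordmx V)} ->
  {in [:: n; r1; r2], forall s, ~~ eigenvalue A1 s} ->
  {in [:: n; r1; r2], forall s, ~~ eigenvalue A2 s} ->
  (A1 - A2) \in unitmx -> vandermonde3_free A1 A2 B.
Proof.
move=> partV triB comm1 comm2 noeig1 noeig2 inj12 z1 z2 y sum0 sum1 sum2.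
have free12 s : s \in [:: n; r1; r2] -> vandermonde3_free A1 A2 s%:M.
  by move=> hs; apply: vandermonde3_free_scalar; [apply: noeig1 | apply: noeig2 |].
have inV V : V \in [:: V0; V1; V2] -> comm_mx A1 (coordmx V) /\ comm_mx A2 (coordmx V).
  by move=> hV; split; [apply: comm1 | apply: comm2].
have [yB0 yB1 yB2] := scalar_triangular_coord partV triB y.
have [yBB0 yBB1 yBB2] := scalar_triangular_coord partV triB (y *m B).
have [c10 c20] := inV V0 (mem_head _ _).
have [c11 c21] : comm_mx A1 (coordmx V1) /\ comm_mx A2 (coordmx V1).
  by apply: inV; rewrite !inE eqxx orbT.
have [c12 c22] : comm_mx A1 (coordmx V2) /\ comm_mx A2 (coordmx V2).
  by apply: inV; rewrite !inE eqxx !orbT.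
have [z10 z20 y0] : [/\ z1 *m coordmx V0 = 0, z2 *m coordmx V0 = 0 & y *m coordmx V0 = 0].
  apply: (vandermonde3_coord c10 c20 (free12 n _) yB0 _ sum0 sum1 sum2).
    by rewrite mem_head.
  by rewrite mulmxA yBB0 yB0 scalerA.
have yB0' : y *m B *m coordmx V0 = 0 by rewrite yB0 y0 scaler0.
have [z11 z21 y1] : [/\ z1 *m coordmx V1 = 0, z2 *m coordmx V1 = 0 & y *m coordmx V1 = 0].
  apply: (vandermonde3_coord c11 c21 (free12 r1 _) (yB1 y0) _ sum0 sum1 sum2).
    by rewrite !inE eqxx orbT.
  by rewrite mulmxA (yBB1 yB0') (yB1 y0) scalerA.
have [z12 z22 y2] : [/\ z1 *m coordmx V2 = 0, z2 *m coordmx V2 = 0 & y *m coordmx V2 = 0].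
  apply: (vandermonde3_coord c12 c22 (free12 r2 _) (yB2 y0) _ sum0 sum1 sum2).
    by rewrite !inE eqxx !orbT.
  by rewrite mulmxA (yBB2 yB0') (yB2 y0) scalerA.
by split; apply: (partition3_coordmx_eq0 partV).
Qed.

(* For exponents (1,2) the kernel vectors z_0 A and z_1 B satisfy the (0,1) system. *)
Lemma vandermonde2_free A B (i j : nat) z0 z1 :
  A \in unitmx -> B \in unitmx -> (A - B) \in unitmx -> (A *m A - B *m B) \in unitmx ->
  (i < j < 3)%N ->
  z0 *m A ^+ i + z1 *m B ^+ i = 0 -> z0 *m A ^+ j + z1 *m B ^+ j = 0 -> z0 = 0 /\ z1 = 0.
Proof.
move=> unitA unitB /unitmx_subP inj1 /unitmx_subP inj2 /andP[ltij ltj3].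
have solve01 (C D : 'M[F]_l) (w0 w1 : 'rV[F]_l) : (forall z, z *m C = z *m D -> z = 0) ->
    w0 + w1 = 0 -> w0 *m C + w1 *m D = 0 -> w0 = 0 /\ w1 = 0.
  move=> injCD sum0 sum1; have w1E : w1 = - w0 by apply/eqP; rewrite -addr_eq0 addrC sum0.
  have w00 : w0 = 0 by apply: injCD; apply/eqP; rewrite -subr_eq0 -mulNmx -w1E sum1.
  by rewrite w1E w00 oppr0.
case: i ltij => [|[|[|i]]]; case: j ltj3 => [|[|[|j]]] //= _ _;
  rewrite ?expr0 ?expr1 ?expr2 -?idmxE ?mulmx1 -?mulmxE => eq0 eq1.
- exact: solve01 inj1 eq0 eq1.
- exact: solve01 inj2 eq0 eq1.
rewrite !mulmxA in eq1; have [z0A0 z1B0] := solve01 _ _ _ _ inj1 eq0 eq1.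
by split; [apply: (unitmx_rowP _ unitA) | apply: (unitmx_rowP _ unitB)].
Qed.

End SpectralSeparation.

Section ConjugatedBlockMatrix.
Variables (F : fieldType) (l : nat).

Lemma blk_idx_subproof (i : 'I_(l %/ 3)) (k : 'I_3) : (3 * i + k < l)%N.
Proof. have := ltn_ord i; have := ltn_ord k; lia. Qed.

Definition blk_idx i k : 'I_l := Ordinal (blk_idx_subproof i k).

Lemma evecM (j : 'I_l) (M : 'M[F]_l) : evec j *m M = row j M.
Proof. by rewrite rowE. Qed.

Lemma Pmx_blk_idx (g a b : F) (u v w : 'I_(l %/ 3) -> 'I_l) i k :
  evec (blk_idx i k) *m Pmx g a b u v w =
  row k (Nmx g a b (evec (u i)) (evec (v i)) (evec (w i))).
Proof.
rewrite evecM; apply/rowP => j; rewrite /Pmx !mxE /=.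
have -> : insub ((3 * i + k) %/ 3)%N = Some i.
  by rewrite (_ : (3 * i + k) %/ 3 = i)%N ?valK //; have := ltn_ord k; lia.
have -> : inord ((3 * i + k) %% 3) = k.
  by apply: val_inj; rewrite /= inordK; have := ltn_ord k; lia.
by rewrite !mxE.
Qed.

Lemma Ablk_blk_idx i (k k' : 'I_3) : (k' = (k + 2) %% 3 :> nat)%N ->
  evec (blk_idx i k) *m (Ablk l : 'M[F]_l) = evec (blk_idx i k').
Proof.
move=> kk'; rewrite evecM; apply/rowP => j; rewrite /Ablk !mxE eqxx /=.
congr (_%:R); congr (nat_of_bool _).
apply/andP/eqP => [[/eqP ij /eqP jk] | ->]; have := ltn_ord k; have := ltn_ord k'.
  by move=> *; apply: val_inj => /=; lia.
by move=> *; split; apply/eqP => /=; lia.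
Qed.

Lemma Nmx_row0 (g a b : F) (eu ev ew : 'rV[F]_l) : row c0 (Nmx g a b eu ev ew) = eu.
Proof. by apply/rowP => j; rewrite !mxE. Qed.

Lemma Nmx_row1 (g a b : F) (eu ev ew : 'rV[F]_l) :
  row c1 (Nmx g a b eu ev ew) = eu - (a * g / (g - 1)) *: ev + (b / (g - 1)) *: ew.
Proof. by apply/rowP => j; rewrite !mxE. Qed.

Lemma Nmx_row2 (g a b : F) (eu ev ew : 'rV[F]_l) :
  row c2 (Nmx g a b eu ev ew) = eu + (a / (g - 1)) *: ev - (b * g / (g - 1)) *: ew.
Proof. by apply/rowP => j; rewrite !mxE. Qed.

Variables (g a b lam : F) (u v w : 'I_(l %/ 3) -> 'I_l).
Hypotheses (g2E : g ^+ 2 = -1 - g) (g1 : g - 1 != 0) (a0 : a != 0) (b0 : b != 0).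
Hypothesis uvw_cover : forall j : 'I_l, exists i, [\/ j = u i, j = v i | j = w i].

Local Notation P := (Pmx g a b u v w).
Local Notation A := (lam *: (invmx P *m Ablk l *m P)).

Lemma Ablk_blk_idx0 i : evec (blk_idx i c0) *m (Ablk l : 'M[F]_l) = evec (blk_idx i c2).
Proof. exact: Ablk_blk_idx. Qed.

Lemma Ablk_blk_idx1 i : evec (blk_idx i c1) *m (Ablk l : 'M[F]_l) = evec (blk_idx i c0).
Proof. exact: Ablk_blk_idx. Qed.

Lemma Ablk_blk_idx2 i : evec (blk_idx i c2) *m (Ablk l : 'M[F]_l) = evec (blk_idx i c1).
Proof. exact: Ablk_blk_idx. Qed.

(* Scaled by a^-1 and b^-1 so that [P] maps them to e_{v i} and e_{w i}. *)
Definition Ablk_vec_g2 i : 'rV[F]_l :=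
  a^-1 *: (evec (blk_idx i c0) + g ^+ 2 *: evec (blk_idx i c1) + g *: evec (blk_idx i c2)).
Definition Ablk_vec_g i : 'rV[F]_l :=
  b^-1 *: (evec (blk_idx i c0) + g *: evec (blk_idx i c1) + g ^+ 2 *: evec (blk_idx i c2)).

Lemma Pmx_u i : evec (blk_idx i c0) *m P = evec (u i).
Proof. by rewrite Pmx_blk_idx Nmx_row0. Qed.

Lemma Pmx_v i : Ablk_vec_g2 i *m P = evec (v i).
Proof.
rewrite /Ablk_vec_g2 -!scalemxAl !mulmxDl -!scalemxAl !Pmx_blk_idx Nmx_row0 Nmx_row1 Nmx_row2.
by apply/rowP => j; rewrite !mxE; field: g2E; rewrite g1 a0.
Qed.

Lemma Pmx_w i : Ablk_vec_g i *m P = evec (w i).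
Proof.
rewrite /Ablk_vec_g -!scalemxAl !mulmxDl -!scalemxAl !Pmx_blk_idx Nmx_row0 Nmx_row1 Nmx_row2.
by apply/rowP => j; rewrite !mxE; field: g2E; rewrite g1 b0.
Qed.

Lemma Ablk_vec_g2_eigen i : Ablk_vec_g2 i *m Ablk l = g ^+ 2 *: Ablk_vec_g2 i.
Proof.
rewrite /Ablk_vec_g2 -!scalemxAl !mulmxDl -!scalemxAl Ablk_blk_idx0 Ablk_blk_idx1 Ablk_blk_idx2.
by apply/rowP => j; rewrite !mxE; ring: g2E.
Qed.

Lemma Ablk_vec_g_eigen i : Ablk_vec_g i *m Ablk l = g *: Ablk_vec_g i.
Proof.
rewrite /Ablk_vec_g -!scalemxAl !mulmxDl -!scalemxAl Ablk_blk_idx0 Ablk_blk_idx1 Ablk_blk_idx2.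
by apply/rowP => j; rewrite !mxE; ring: g2E.
Qed.

Lemma Pmx_unit : P \in unitmx.
Proof.
rewrite -row_full_unit -sub1mx; apply/row_subP => j; rewrite row1 -/(evec j).
have [i [->|->|->]] := uvw_cover j.
- by rewrite -Pmx_u submxMl.
- by rewrite -Pmx_v submxMl.
- by rewrite -Pmx_w submxMl.
Qed.

Lemma conj_eigen (x e : 'rV[F]_l) mu :
  x *m P = e -> x *m Ablk l = mu *: x -> e *m A = (lam * mu) *: e.
Proof.
move=> xP xA; rewrite -xP -scalemxAr !mulmxA (mulmxK Pmx_unit) xA -scalemxAl scalerA.
by rewrite mulrC.
Qed.

Lemma conj_Ablk_u i : evec (u i) *m A =
  lam *: (evec (u i) + (a / (g - 1)) *: evec (v i) - (b * g / (g - 1)) *: evec (w i)).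
Proof.
rewrite -{1}Pmx_u -scalemxAr !mulmxA (mulmxK Pmx_unit) Ablk_blk_idx0.
by rewrite Pmx_blk_idx Nmx_row2.
Qed.

Lemma conj_Ablk_v i : evec (v i) *m A = (lam * g ^+ 2) *: evec (v i).
Proof. exact: conj_eigen (Pmx_v i) (Ablk_vec_g2_eigen i). Qed.

Lemma conj_Ablk_w i : evec (w i) *m A = (lam * g) *: evec (w i).
Proof. exact: conj_eigen (Pmx_w i) (Ablk_vec_g_eigen i). Qed.

End ConjugatedBlockMatrix.

Lemma ord3_cases (p q r c : 'I_3) : p != q -> q != r -> p != r -> [\/ c = p, c = q | c = r].
Proof.
case: p => [[|[|[|?]]] ?] //; case: q => [[|[|[|?]]] ?] //; case: r => [[|[|[|?]]] ?] //;
case: c => [[|[|[|?]]] ?] // => *;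
  first [ by apply: Or31; apply: val_inj | by apply: Or32; apply: val_inj
        | by apply: Or33; apply: val_inj ].
Qed.

Section PerfectColoredMatching.
Variables (F : fieldType) (l : nat) (Z : 'I_3 -> 'I_(l %/ 3) -> 'I_l).
Hypothesis pcmZ : perfect_colored_matching Z.

Lemma pcm_cover j : exists c i, j = Z c i.
Proof.
have : j \in \bigcup_(c < 3) colorset Z c by case: pcmZ => _ ->; rewrite inE.
by case/bigcupP => c _ /imsetP [i _ ->]; exists c, i.
Qed.

Lemma mem_colorset c i c' : (Z c i \in colorset Z c') = (c == c').
Proof.
have [<-|cc'] := eqVneq c c'; first exact: imset_f.
by case: pcmZ => disjZ _; apply: (disjointFr (disjZ _ _ cc')); apply: imset_f.
Qed.

Lemma pcm_partition3 p q r : p != q -> q != r -> p != r ->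
  partition3 (colorset Z p) (colorset Z q) (colorset Z r).
Proof.
move=> pq qr pr; case: pcmZ => disjZ _; split; try by apply: disjoint_setI0; apply: disjZ.
apply/setP => j; rewrite !inE; have [c [i ->]] := pcm_cover j.
by rewrite !mem_colorset; case: (ord3_cases c pq qr pr) => ->; rewrite eqxx ?orbT.
Qed.

Lemma pcm_edge_cover p q r : p != q -> q != r -> p != r ->
  forall j, exists i, [\/ j = Z p i, j = Z q i | j = Z r i].
Proof.
move=> pq qr pr j; have [c [i ->]] := pcm_cover j; exists i.
by case: (ord3_cases c pq qr pr) => ->; [apply: Or31 | apply: Or32 | apply: Or33].
Qed.

Lemma SW_coordmx c : (@SW F l Z c :=: coordmx (colorset Z c))%MS.
Proof.
have SW_fixed : SW Z c *m coordmx (colorset Z c) = SW Z c :> 'M[F]_(l %/ 3, l).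
  apply/row_matrixP => i.
  by rewrite row_mul /SW rowK evec_coordmx mem_colorset eqxx scale1r.
apply/eqmxP/andP; split; first by rewrite -{1}SW_fixed submxMl.
apply/row_subP => j; rewrite rowE evec_coordmx.
have [/imsetP [i _ ->]|_] := boolP (j \in colorset Z c); last by rewrite scale0r sub0mx.
by rewrite scale1r -(rowK (fun i => evec (Z c i) : 'rV[F]_l) i) row_sub.
Qed.

End PerfectColoredMatching.

Lemma pairing_colorset_mem (l : nat) (X Y : 'I_3 -> 'I_(l %/ 3) -> 'I_l) :
  perfect_colored_matching Y -> (forall i, exists d, edge X i \subset colorset Y d) ->
  forall c i c1 c2, (X c1 i \in colorset Y c) = (X c2 i \in colorset Y c).
Proof.
move=> pcmY XY c i c1 c2; have [d /subsetP XiY] := XY i.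
have colorE c' : X c' i \in colorset Y d -> (X c' i \in colorset Y c) = (d == c).
  by have [c'' [i' ->]] := pcm_cover pcmY (X c' i); rewrite !(mem_colorset pcmY) => /eqP->.
by rewrite !colorE //; apply: XiY; apply: imset_f.
Qed.

Section ConjugatedBlockMatrixOnMatching.
Variables (F : fieldType) (g a b lam : F) (l : nat) (Z : 'I_3 -> 'I_(l %/ 3) -> 'I_l).
Hypotheses (g2E : g ^+ 2 = -1 - g) (g1 : g - 1 != 0) (a0 : a != 0) (b0 : b != 0).
Hypothesis pcmZ : perfect_colored_matching Z.
Variables p q r : 'I_3.
Hypotheses (pq : p != q) (qr : q != r) (pr : p != r).

Local Notation A := (lam *: (invmx (Pmx g a b (Z p) (Z q) (Z r)) *m Ablk l *m
  Pmx g a b (Z p) (Z q) (Z r))).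

Let qp : q != p. Proof. by rewrite eq_sym. Qed.
Let rq : r != q. Proof. by rewrite eq_sym. Qed.
Let rp : r != p. Proof. by rewrite eq_sym. Qed.
Let cover := pcm_edge_cover pcmZ pq qr pr.

Ltac conj_simpl :=
  rewrite ?mulmxA ?evec_coordmx -?scalemxAl ?(conj_Ablk_u _ g2E g1 a0 b0 cover)
    ?(conj_Ablk_v _ g2E g1 a0 b0 cover) ?(conj_Ablk_w _ g2E g1 a0 b0 cover);
  do 3 rewrite -?scalemxAl -?scalemxAr ?mulmxDl ?mulmxBl ?mulNmx ?evec_coordmx
    ?(mem_colorset pcmZ) ?eqxx ?(negPf pq) ?(negPf qr) ?(negPf pr) ?(negPf qp)
    ?(negPf rq) ?(negPf rp) /= ?mulr1n ?mulr0n ?scale1r ?scale0r.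

Lemma Pmx_conj_triangular :
  scalar_triangular (colorset Z p) (colorset Z q) (colorset Z r) A lam (lam * g ^+ 2) (lam * g).
Proof.
split; apply: matrix_evecP => j; have [c [i ->]] := pcm_cover pcmZ j;
  case: (ord3_cases c pq qr pr) => ->; conj_simpl; apply/rowP => k; rewrite !mxE; ring.
Qed.

Lemma Pmx_conj_comm (S : {set 'I_l}) :
  (forall i c c', (Z c i \in S) = (Z c' i \in S)) -> comm_mx A (coordmx S).
Proof.
move=> edgeS; apply: matrix_evecP => j; have [c [i ->]] := pcm_cover pcmZ j.
case: (ord3_cases c pq qr pr) => ->; conj_simpl; rewrite ?(edgeS i q p) ?(edgeS i r p);
  apply/rowP => k; rewrite !mxE; ring.
Qed.

End ConjugatedBlockMatrixOnMatching.

Section AW.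
Variables (F : fieldType) (g a a' a'' b b' b'' : F) (l : nat).
Hypotheses (g2E : g ^+ 2 = -1 - g) (g1 : g - 1 != 0).
Hypotheses (a0 : a != 0) (a'0 : a' != 0) (a''0 : a'' != 0).
Hypotheses (b0 : b != 0) (b'0 : b' != 0) (b''0 : b'' != 0).
Variables (Z : 'I_3 -> 'I_(l %/ 3) -> 'I_l) (lam : F).
Hypothesis pcmZ : perfect_colored_matching Z.

Lemma AW_triangular p : exists q r,
  partition3 (colorset Z p) (colorset Z q) (colorset Z r) /\
  scalar_triangular (colorset Z p) (colorset Z q) (colorset Z r)
    (AW g a a' a'' b b' b'' Z lam p) lam (lam * g ^+ 2) (lam * g).
Proof.
have [c01 c12 c02] : [/\ c0 != c1, c1 != c2 & c0 != c2] by [].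
case: (ord3_cases p c01 c12 c02) => ->; rewrite /AW /PW /=.
- by exists c1, c2; split; [apply: pcm_partition3 | apply: Pmx_conj_triangular].
- by exists c2, c0; split; [apply: pcm_partition3 | apply: Pmx_conj_triangular].
- by exists c0, c1; split; [apply: pcm_partition3 | apply: Pmx_conj_triangular].
Qed.

Lemma AW_comm p (S : {set 'I_l}) :
  (forall i c c', (Z c i \in S) = (Z c' i \in S)) ->
  comm_mx (AW g a a' a'' b b' b'' Z lam p) (coordmx S).
Proof.
have [c01 c12 c02] : [/\ c0 != c1, c1 != c2 & c0 != c2] by [].
by move=> edgeS; case: (ord3_cases p c01 c12 c02) => ->; rewrite /AW /PW /=;
  apply: Pmx_conj_comm.
Qed.

End AW.

Lemma big_ord2 (V : zmodType) (f : 'I_2 -> V) : \sum_(a < 2) f a = f ord0 + f ord_max.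
Proof. by rewrite !big_ord_recl big_ord0 addr0; congr (_ + f _); apply: val_inj. Qed.

Lemma big_ord3 (V : zmodType) (f : 'I_3 -> V) : \sum_(a < 3) f a = f c0 + f c1 + f c2.
Proof.
by rewrite !big_ord_recl big_ord0 addr0 addrA; congr (f _ + f _ + f _); apply: val_inj.
Qed.

Lemma forall_ord2 (P : 'I_2 -> Prop) : P ord0 -> P ord_max -> forall a, P a.
Proof.
by move=> P0 P1 [[|[|//]] lt_a];
  [rewrite (_ : Ordinal _ = ord0) | rewrite (_ : Ordinal _ = ord_max)]; try apply: val_inj.
Qed.

Lemma forall_ord3 (P : 'I_3 -> Prop) : P c0 -> P c1 -> P c2 -> forall a, P a.
Proof.
by move=> P0 P1 P2 [[|[|[|//]]] lt_a];
  [rewrite (_ : Ordinal _ = c0) | rewrite (_ : Ordinal _ = c1) | rewrite (_ : Ordinal _ = c2)];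
  try apply: val_inj.
Qed.

Section SubspaceCondition.
Variables (F : fieldType) (l n r : nat).
Implicit Types (A : 'M[F]_l).

Lemma subspace_cond_sub_unit k (A : 'I_k -> 'M[F]_l) (V : 'I_k -> 'M[F]_(n, l)) p q :
  subspace_cond r.+2 A V -> p != q -> (A p - A q) \in unitmx.
Proof.
move=> [_ _ _ _ blockA] pq; apply/unitmx_subP.
wlog lt_pq : p q pq / (p < q)%N => [hwlog z zpq | z zpq].
  have [lt|lt|/val_inj pq'] := ltngtP p q; last by rewrite pq' eqxx in pq.
    exact: hwlog pq lt z zpq.
  by apply: (hwlog q p _ lt z (esym zpq)); rewrite eq_sym.
pose s (a : 'I_2) := if val a == 0%N then p else q.
pose c (a : 'I_2) : 'I_r.+2 := inord a.
have hs : {homo s : x y / (x < y)%N} by rewrite /s => [[[|[|?]] ?] [[|[|?]] ?]].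
have hc : {homo c : x y / (x < y)%N}.
  by rewrite /c => [[[|[|?]] ?] [[|[|?]] ?]] //=; rewrite !inordK.
have /unitmx_mxblockP free2 := blockA 2 s c hs hc.
apply: (free2 (fun a => if val a == 0%N then z else - z)) ord0 => b.
rewrite big_ord2 /s /c /= mulNmx; apply/eqP; rewrite subr_eq0; apply/eqP.
by case: b => [[|[|//]] lt_b]; rewrite inordK ?expr0 ?expr1.
Qed.

Lemma coordmx_stable m (V : 'M[F]_(m, l)) S A :
  (V :=: coordmx S)%MS -> comm_mx A (coordmx S) -> A \in unitmx -> (V *m A == V)%MS.
Proof.
move=> VS AS unitA; apply/eqmxP; apply: eqmx_trans (eqmxMr A VS) _.
by rewrite -AS; apply: eqmx_trans (eqmxMfull _ _) (eqmx_sym VS); rewrite row_full_unit.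
Qed.

End SubspaceCondition.

Lemma famU_lo T (f h : 'I_3 -> T) (i : 'I_(3 + 3)) : (i < 3)%N -> famU f h i = f (inord i).
Proof.
rewrite /famU; case: splitP => [j ij _ | j ij]; last by rewrite ij; have := ltn_ord j; lia.
by congr f; apply: val_inj; rewrite /= inordK ij.
Qed.

Lemma famU_hi T (f h : 'I_3 -> T) (i : 'I_(3 + 3)) :
  (3 <= i)%N -> famU f h i = h (inord (i - 3)).
Proof.
rewrite /famU; case: splitP => [j ij | j ij _]; first by rewrite ij; have := ltn_ord j; lia.
by congr h; apply: val_inj; rewrite /= inordK ij; have := ltn_ord j; lia.
Qed.

Lemma comm_coordmx_in (F : fieldType) (l : nat) (A : 'M[F]_l) (S : 'I_3 -> {set 'I_l}) p q r :
  (forall c, comm_mx A (coordmx (S c))) ->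
  {in [:: S p; S q; S r], forall V, comm_mx A (coordmx V)}.
Proof. by move=> AS V; rewrite !inE => /or3P [] /eqP ->. Qed.

Section UnionFamily.
Variables (F : fieldType) (l n : nat).
Variables (FX FY : 'I_3 -> 'M[F]_l) (VX VY : 'I_3 -> 'M[F]_(n, l)).
Variables (SX SY : 'I_3 -> {set 'I_l}) (mX kX kX' mY kY kY' : F).
Hypotheses (HX : subspace_cond 3 FX VX) (HY : subspace_cond 3 FY VY).
Hypotheses (VX_coord : forall c, (VX c :=: coordmx (SX c))%MS)
  (VY_coord : forall c, (VY c :=: coordmx (SY c))%MS).
Hypothesis FX_triangular : forall p, exists q r,
  partition3 (SX p) (SX q) (SX r) /\ scalar_triangular (SX p) (SX q) (SX r) (FX p) mX kX kX'.
Hypothesis FY_triangular : forall p, exists q r,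
  partition3 (SY p) (SY q) (SY r) /\ scalar_triangular (SY p) (SY q) (SY r) (FY p) mY kY kY'.
Hypotheses (FX_comm : forall p c, comm_mx (FX p) (coordmx (SY c)))
  (FY_comm : forall p c, comm_mx (FY p) (coordmx (SX c))).
Hypothesis spectra_sep : forall e e', e \in [:: mX; kX; kX'] -> e' \in [:: mY; kY; kY'] ->
  (e != e') && (e ^+ 2 != e' ^+ 2).

Lemma FX_unit p : FX p \in unitmx. Proof. by case: HX. Qed.
Lemma FY_unit p : FY p \in unitmx. Proof. by case: HY. Qed.

Lemma FX_noneigen p e : e \in [:: mY; kY; kY'] -> ~~ eigenvalue (FX p) e.
Proof.
move=> eY; have [q [r [partX triX]]] := FX_triangular p.
apply: (scalar_triangular_noneigen partX triX); apply/negP => eX.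
by have /andP[] := spectra_sep eX eY; rewrite eqxx.
Qed.

Lemma FY_noneigen p e : e \in [:: mX; kX; kX'] -> ~~ eigenvalue (FY p) e.
Proof.
move=> eX; have [q [r [partY triY]]] := FY_triangular p.
apply: (scalar_triangular_noneigen partY triY); apply/negP => eY.
by have /andP[] := spectra_sep eX eY; rewrite eqxx.
Qed.

Lemma FX_FY_sub_unit p p' : (FX p - FY p') \in unitmx.
Proof.
have [q [r [partX triX]]] := FX_triangular p; have [q' [r' [partY triY]]] := FY_triangular p'.
apply: (scalar_triangular_sub_unit partX partY triX triY).
  exact: comm_coordmx_in (FY_comm p').
by move=> e e' eX eY; have /andP[] := spectra_sep eX eY.
Qed.

Lemma FX_FY_sqr_sub_unit p p' : (FX p *m FX p - FY p' *m FY p') \in unitmx.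
Proof.
have [q [r [partX triX]]] := FX_triangular p; have [q' [r' [partY triY]]] := FY_triangular p'.
apply: (scalar_triangular_sub_unit partX partY (scalar_triangular_sqr triX)
  (scalar_triangular_sqr triY)).
  by apply: comm_coordmx_in => c; apply/comm_mx_sym/comm_mxM; apply/comm_mx_sym.
move=> x y /(@mapP _ _ (fun x => x ^+ 2) [:: mX; kX; kX']) [e eX ->].
move=> /(@mapP _ _ (fun x => x ^+ 2) [:: mY; kY; kY']) [e' eY ->].
by have /andP[] := spectra_sep eX eY.
Qed.

Lemma vandermonde3_XXY p1 p2 p' : p1 != p2 -> vandermonde3_free (FX p1) (FX p2) (FY p').
Proof.
move=> p12; have [q [r [partY triY]]] := FY_triangular p'.
apply: (scalar_triangular_vandermonde3 partY triY).
- exact: comm_coordmx_in (FX_comm p1).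
- exact: comm_coordmx_in (FX_comm p2).
- by move=> e; apply: FX_noneigen.
- by move=> e; apply: FX_noneigen.
exact: subspace_cond_sub_unit HX p12.
Qed.

Lemma vandermonde3_YYX p1 p2 p' : p1 != p2 -> vandermonde3_free (FY p1) (FY p2) (FX p').
Proof.
move=> p12; have [q [r [partX triX]]] := FX_triangular p'.
apply: (scalar_triangular_vandermonde3 partX triX).
- exact: comm_coordmx_in (FY_comm p1).
- exact: comm_coordmx_in (FY_comm p2).
- by move=> e; apply: FY_noneigen.
- by move=> e; apply: FY_noneigen.
exact: subspace_cond_sub_unit HY p12.
Qed.

Lemma mxblock_free_famU_lo t (s : 'I_t -> 'I_(3 + 3)) (c : 'I_t -> 'I_3) :
  {homo s : x y / (x < y)%N} -> {homo c : x y / (x < y)%N} -> (forall a, s a < 3)%N ->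
  mxblock_free (fun a b => famU FX FY (s a) ^+ c b).
Proof.
move=> hs hc sX; have [_ _ _ _ blockX] := HX.
have hs' : {homo (fun a => inord (s a) : 'I_3) : x y / (x < y)%N}.
  by move=> x y /hs; rewrite !inordK ?sX.
have /unitmx_mxblockP freeX := blockX t _ c hs' hc.
move=> z zB; apply: freeX => b; rewrite -[RHS](zB b).
by apply: eq_bigr => a _; rewrite famU_lo.
Qed.

Lemma mxblock_free_famU_hi t (s : 'I_t -> 'I_(3 + 3)) (c : 'I_t -> 'I_3) :
  {homo s : x y / (x < y)%N} -> {homo c : x y / (x < y)%N} -> (forall a, 3 <= s a)%N ->
  mxblock_free (fun a b => famU FX FY (s a) ^+ c b).
Proof.
move=> hs hc sY; have [_ _ _ _ blockY] := HY.
have hs' : {homo (fun a => inord (s a - 3) : 'I_3) : x y / (x < y)%N}.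
  move=> x y /hs sxy; have := sY x; have := sY y; have := ltn_ord (s x).
  by have := ltn_ord (s y); move=> *; rewrite !inordK; lia.
have /unitmx_mxblockP freeY := blockY t _ c hs' hc.
move=> z zB; apply: freeY => b; rewrite -[RHS](zB b).
by apply: eq_bigr => a _; rewrite famU_hi.
Qed.

Lemma mxblock2_free_mixed (s : 'I_2 -> 'I_(3 + 3)) (c : 'I_2 -> 'I_3) :
  {homo c : x y / (x < y)%N} -> (s ord0 < 3)%N -> (3 <= s ord_max)%N ->
  mxblock_free (fun a b => famU FX FY (s a) ^+ c b).
Proof.
move=> hc sX sY z zB.
have eq0 := zB ord0; have eq1 := zB ord_max.
rewrite !big_ord2 (famU_lo _ _ sX) (famU_hi _ _ sY) in eq0 eq1.
suff [z0 z1] : z ord0 = 0 /\ z ord_max = 0 by apply: forall_ord2.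
apply: (vandermonde2_free _ _ _ _ _ eq0 eq1).
- exact: FX_unit.
- exact: FY_unit.
- exact: FX_FY_sub_unit.
- exact: FX_FY_sqr_sub_unit.
by rewrite ltn_ord andbT; apply: hc.
Qed.

Lemma mxblock3_free_mixed (s : 'I_3 -> 'I_(3 + 3)) (c : 'I_3 -> 'I_3) :
  {homo s : x y / (x < y)%N} -> {homo c : x y / (x < y)%N} -> (s c0 < 3)%N -> (3 <= s c2)%N ->
  mxblock_free (fun a b => famU FX FY (s a) ^+ c b).
Proof.
move=> hs hc sX sY z zB.
have cE j : c j = j.
  have := hc c0 c1 isT; have := hc c1 c2 isT; have := ltn_ord (c c2).
  by move: j; apply: forall_ord3 => *; apply: val_inj => /=; lia.
have := zB c0; have := zB c1; have := zB c2; rewrite !cE !big_ord3 /=.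
rewrite !expr0 -!idmxE !mulmx1 !expr1 !expr2 -!mulmxE => eq2 eq1 eq0.
have lt01 := hs c0 c1 isT; have lt12 := hs c1 c2 isT.
have := ltn_ord (s c1); have := ltn_ord (s c2); have [s1X|s1Y] := ltnP (s c1) 3 => lt1 lt2.
  rewrite (famU_lo _ _ sX) (famU_lo _ _ s1X) (famU_hi _ _ sY) in eq0 eq1 eq2.
  have p12 : (inord (s c0) : 'I_3) != inord (s c1).
    by apply/eqP => /(congr1 val); rewrite /= !inordK //; lia.
  have [z0 z1 z2] := vandermonde3_XXY p12 eq0 eq1 eq2.
  exact: forall_ord3.
rewrite (famU_lo _ _ sX) (famU_hi _ _ s1Y) (famU_hi _ _ sY) -!addrA in eq0 eq1 eq2.
rewrite addrC in eq0; rewrite addrC in eq1; rewrite addrC in eq2.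
have p12 : (inord (s c1 - 3) : 'I_3) != inord (s c2 - 3).
  by apply/eqP => /(congr1 val); rewrite /= !inordK; lia.
have [z1 z2 z0] := vandermonde3_YYX p12 eq0 eq1 eq2.
exact: forall_ord3.
Qed.

Lemma famU_mxblock_free t (s : 'I_t -> 'I_(3 + 3)) (c : 'I_t -> 'I_3) :
  {homo s : x y / (x < y)%N} -> {homo c : x y / (x < y)%N} ->
  mxblock_free (fun a b => famU FX FY (s a) ^+ c b).
Proof.
move=> hs hc.
have [allX|/forallPn [aY]] := boolP [forall a, s a < 3]%N.
  by apply: mxblock_free_famU_lo => //; apply/forallP.
rewrite -leqNgt => saY.
have [allY|/forallPn [aX]] := boolP [forall a, 3 <= s a]%N.
  by apply: mxblock_free_famU_hi => //; apply/forallP.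
rewrite -ltnNge => saX.
have le_s (a b : 'I_t) : (a <= b)%N -> (s a <= s b)%N.
  by rewrite leq_eqVlt => /orP [/eqP/val_inj -> // | /hs/ltnW].
have c_inj : injective c.
  by move=> x y cxy; apply: ord_inj; case: (ltngtP x y) => // /hc; rewrite cxy ltnn.
have := leq_card _ c_inj; rewrite !card_ord; clear c_inj; move: aY aX saY saX le_s.
case: t s c hs hc => [|[|[|[|//]]]] s c hs hc aY aX saY saX le_s _.
- by have := ltn_ord aY.
- by have := le_s aY aX (leq_trans (leq_ord aY) (leq0n aX)); lia.
- apply: mxblock2_free_mixed => //.
    exact: leq_ltn_trans (le_s ord0 aX (leq0n aX)) saX.
  exact: leq_trans saY (le_s aY ord_max (leq_ord aY)).
apply: mxblock3_free_mixed => //.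
  exact: leq_ltn_trans (le_s c0 aX (leq0n aX)) saX.
exact: leq_trans saY (le_s aY c2 (leq_ord aY)).
Qed.

Lemma subspace_cond_famU : subspace_cond 3 (famU FX FY) (famU VX VY).
Proof.
have [unitX rkX sumX stabX _] := HX; have [unitY rkY sumY stabY _] := HY.
split => [i|i|i|i j|t s c hs hc].
- by rewrite /famU; case: split => p; [apply: unitX | apply: unitY].
- by rewrite /famU; case: split => p; [apply: rkX | apply: rkY].
- by rewrite /famU; case: split => p; [apply: sumX | apply: sumY].
- rewrite /famU; case: splitP => p ip; case: splitP => p' jp' ij.
  + apply: stabX; apply: contra ij => /eqP pp'; apply/eqP/val_inj.
    by rewrite /= ip jp' pp'.
  + exact: coordmx_stable (VX_coord p) (FY_comm p' p) (FY_unit p').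
  + exact: coordmx_stable (VY_coord p) (FX_comm p' p) (FX_unit p').
  + apply: stabY; apply: contra ij => /eqP pp'; apply/eqP/val_inj.
    by rewrite /= ip jp' pp'.
by apply/unitmx_mxblockP; apply: famU_mxblock_free.
Qed.

End UnionFamily.

Section PrimitiveCubeRoot.
Variables (F : fieldType) (g : F).
Hypothesis g_prim : 3.-primitive_root g.

Lemma prim_root3_sub1 : g - 1 != 0.
Proof.
by rewrite subr_eq0; apply/eqP => g1; have := prim_order_dvd g_prim 1; rewrite expr1 g1 eqxx.
Qed.

Lemma prim_root3_sqr : g ^+ 2 = -1 - g.
Proof.
have : (g - 1) * (g ^+ 2 + g + 1) = 0.
  by rewrite (_ : _ * _ = g ^+ 3 - 1); [rewrite prim_expr_order // subrr | ring].
move/eqP; rewrite mulf_eq0 (negPf prim_root3_sub1) /= => /eqP sum0.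
by apply/eqP; rewrite -subr_eq0 -sum0; apply/eqP; ring.
Qed.

(* Since (x g^k)^6 = x^6, equal values or equal squares would force x^6 = y^6. *)
Lemma prim_root3_orbit_sep (x y e e' : F) : x ^+ 6 != y ^+ 6 ->
  e \in [:: x; x * g ^+ 2; x * g] -> e' \in [:: y; y * g ^+ 2; y * g] ->
  (e != e') && (e ^+ 2 != e' ^+ 2).
Proof.
have orbit6 u v : v \in [:: u; u * g ^+ 2; u * g] -> v ^+ 6 = u ^+ 6.
  have g6 k : g ^+ k ^+ 6 = 1.
    by rewrite -exprM mulnC (_ : 6 = 3 * 2)%N // -mulnA exprM (prim_expr_order g_prim) expr1n.
  by rewrite !inE => /or3P [] /eqP ->; rewrite // exprMn ?g6 ?(g6 1%N) mulr1.
move=> xy6 ex ey; rewrite -(orbit6 _ _ ex) -(orbit6 _ _ ey) in xy6.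
apply/andP; split; first by apply: contraNneq xy6 => ->.
by apply: contraNneq xy6 => sqr_eq; rewrite (_ : 6 = 2 * 3)%N // !exprM sqr_eq.
Qed.

End PrimitiveCubeRoot.

Theorem lemma5p9 (F : finFieldType) (g : F) (l : nat)
    (a a' a'' b b' b'' : F) :
  (3 %| #|F|.-1)%N ->
  3.-primitive_root g ->
  (9 %| l)%N ->
  a != 0 -> a' != 0 -> a'' != 0 -> b != 0 -> b' != 0 -> b'' != 0 ->
  (forall Z : 'I_3 -> 'I_(l %/ 3) -> 'I_l, perfect_colored_matching Z ->
     forall lam : F, lam != 0 ->
       subspace_cond 3 (AW g a a' a'' b b' b'' Z lam) (SW Z)) ->
  forall X Y : 'I_3 -> 'I_(l %/ 3) -> 'I_l,
    perfect_colored_matching X -> perfect_colored_matching Y ->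
    pairing_condition X Y ->
  forall lx ly : F, lx != 0 -> ly != 0 -> lx ^+ 6 != ly ^+ 6 ->
    subspace_cond 3
      (famU (AW g a a' a'' b b' b'' X lx) (AW g a a' a'' b b' b'' Y ly))
      (famU (SW X) (SW Y)).
Proof.
move=> _ g_prim _ a0 a'0 a''0 b0 b'0 b''0 HAW X Y pcmX pcmY [XY YX] lx ly lx0 ly0 lxy6.
have g2E := prim_root3_sqr g_prim; have g1 := prim_root3_sub1 g_prim.
apply: (subspace_cond_famU (HAW X pcmX lx lx0) (HAW Y pcmY ly ly0)).
- exact: SW_coordmx.
- exact: SW_coordmx.
- exact: AW_triangular.
- exact: AW_triangular.
- by move=> p c; apply: AW_comm => //; apply: pairing_colorset_mem.
- by move=> p c; apply: AW_comm => //; apply: pairing_colorset_mem.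
by move=> e e'; apply: prim_root3_orbit_sep.
Qed.
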